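(* Let $n\ge3$ and let $A$ be a set of $m$ vertices of $C_n$ with $2\le m\le n$. The following are equivalent: (1) $A$ is a maximizer of $W$ on $C_n$; (2) $A$ is a local maximizer of $W$ on $C_n$; (3) if $m$ is odd then $\mathrm{supp}(\sigma^*_{\lfloor m/2\rfloor}(A))\subseteq\{1,\dots,\lfloor n/2\rfloor\}$, and if $m$ is even then $\mathrm{supp}(\sigma^*_{m/2}(A))\subseteq\{\lfloor n/2\rfloor,\lceil n/2\rceil\}$; (4) for all integers $k$ with $1\le k<\frac m2$ we have $\sigma_k(A)=\sigma^*_k(A)$, and, if $m$ is even, $\mathrm{supp}(\sigma_{m/2}(A))=\{\lfloor n/2\rfloor\}$.
   Context: $C_n$ has vertex set $\{0,\dots,n-1\}$ with $i$ adjacent to $i+1\bmod n$. $d(u,v)$ is geodesic distance; $d^*(u,v)$ is the least non-negative integer congruent to $v-u$ mod $n$. $W(A)=\sum_{\{u,v\}\subseteq A,u\ne v}d(u,v)$ over unordered pairs. $A$ is a maximizer of $W$ if $W(A)=\max\{W(B):|B|=|A|\}$; a perturbation of $A$ is $(A\setminus\{u\})\cup\{v\}$ with $u\in A$, $v\notin A$, $uv$ an edge, and $A$ is a local maximizer if $W(A)\ge W(B)$ for every perturbation $B$. For $A=\{a_0<\dots<a_{m-1}\}$, $\mathrm{span}_A(a_i,a_j)$ is the least positive integer congruent to $j-i$ mod $m$; $\sigma_k(A)=[\,d(u,v):u,v\in A,u\ne v,\mathrm{span}_A(u,v)=k\,]$ and $\sigma^*_k(A)=[\,d^*(u,v):u,v\in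 A,u\ne v,\mathrm{span}_A(u,v)=k\,]$ are multisets over ordered pairs; $\mathrm{supp}$ denotes the underlying set of a multiset. *)

From mathcomp Require Import all_boot.
Set Implicit Arguments. Unset Strict Implicit. Unset Printing Implicit Defensive.

Section Cycle.
Variable n : nat.

Definition dstar (u v : 'I_n) : nat := (val v + n - val u) %% n.

Definition dist (u v : 'I_n) : nat := minn (dstar u v) (dstar v u).

Definition adj (u v : 'I_n) : bool :=
  (val v == (val u).+1 %% n) || (val u == (val v).+1 %% n).

Definition W (A : {set 'I_n}) : nat :=
  \sum_(u in A) \sum_(v in A | val u < val v) dist u v.

Definition maximizer (A : {set 'I_n}) : Prop :=
  forall B : {set 'I_n}, #|B| = #|A| -> W B <= W A.

Definition perturbation (A : {set 'I_n}) (u v : 'I_n) : {set 'I_n} :=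
  (A :\ u) :|: [set v].

Definition local_maximizer (A : {set 'I_n}) : Prop :=
  forall u v : 'I_n, u \in A -> v \notin A -> adj u v ->
    W (perturbation A u v) <= W A.

(* position i of a_i in A = {a_0 < ... < a_{m-1}} *)
Definition pos (A : {set 'I_n}) (u : 'I_n) : nat :=
  #|[set w in A | val w < val u]|.

(* span_A(a_i,a_j): least positive integer congruent to j - i mod m
   (used only for distinct u, v in A, where j <> i) *)
Definition span (A : {set 'I_n}) (u v : 'I_n) : nat :=
  let m := #|A| in
  if pos A u < pos A v then pos A v - pos A u else pos A v + m - pos A u.

Definition span_pairs (A : {set 'I_n}) (k : nat) : pred ('I_n * 'I_n) :=
  [pred p | [&& p.1 \in A, p.2 \in A, p.1 != p.2 & span A p.1 p.2 == k]].

(* multisets sigma_k(A), sigma*_k(A), as sequences considered up to perm_eq *)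
Definition sigma (A : {set 'I_n}) (k : nat) : seq nat :=
  [seq dist p.1 p.2 | p in span_pairs A k].

Definition sigmastar (A : {set 'I_n}) (k : nat) : seq nat :=
  [seq dstar p.1 p.2 | p in span_pairs A k].

End Cycle.

From mathcomp Require Import all_boot zify.
Set Implicit Arguments. Unset Strict Implicit. Unset Printing Implicit Defensive.

(* Rank the other points of [A] clockwise from [u]: the rank of [w] is its
   span from [u].  Call [(u, z)] a short chord if [z] has rank [uphalf m]
   ([m = #|A|]) and the clockwise arc from [u] to [z] is shorter than (3)
   allows.  If the predecessor of [u] is not in [A], moving [u] back one step
   brings [u] closer to at most [m - 1 - uphalf m] points and farther from at
   least [m./2] points, so [A] is not a local maximizer; if the predecessor
   lies in [A], it has a short chord too.  So a local maximizer with a short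
   chord would be the whole cycle, where the span of a pair is its clockwise
   distance and no chord is short.  This gives (2) -> (3), and (3) -> (4) is a
   reformulation.  Under (4), [2 W(A)] is the sum of the clockwise lengths of
   the ordered pairs of span below [m/2], plus [n/2] for each pair of span
   [m/2]; counting for each vertex the short arcs passing over it shows that
   this depends on [n] and [m] only.  A maximizer exists and satisfies (4),
   so every set satisfying (4) has maximal [W]. *)

Lemma ord_valE n (x : 'I_n) : val x = nat_of_ord x. Proof. by []. Qed.

Lemma ord_eqE n (x y : 'I_n) : (x == y) = (nat_of_ord x == nat_of_ord y).
Proof. by []. Qed.

Lemma dstarE n (u v : 'I_n) : dstar u v = if u <= v then v - u else v + n - u.
Proof.
rewrite /dstar !ord_valE; have := ltn_ord u; have := ltn_ord v.
case: (leqP u v) => uv vn un.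
- by rewrite -addnBAC // modnDr modn_small //; lia.
- by rewrite modn_small //; lia.
Qed.

Lemma ord_predE n (u : 'I_n) :
  nat_of_ord (ord_pred u) = if u == 0 :> nat then n.-1 else u.-1.
Proof.
have := ltn_ord u; rewrite /=; case: eqP => [-> | u0] un.
- by rewrite modn_small //; lia.
- by rewrite (_ : (u + n).-1 = u.-1 + n) ?modnDr ?modn_small //; lia.
Qed.

Ltac cycle_lia := rewrite ?dstarE ?ord_eqE ?ord_valE; repeat case: ifPn => ?; lia.
Ltac pred_cases u := have := ltn_ord u; have := ord_predE u; case: ifPn => ?.

Section CycleArithmetic.
Variable n : nat.
Implicit Types u v w x y : 'I_n.

Lemma neq_ord u v : u != v -> u <> v :> nat.
Proof. by move=> uv /val_inj/eqP; apply/negP. Qed.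

Lemma dstar_lt u v : dstar u v < n.
Proof. have := ltn_ord u; have := ltn_ord v; cycle_lia. Qed.

Lemma dstar_eq0 u v : (dstar u v == 0) = (u == v).
Proof.
have := ltn_ord u; have := ltn_ord v => vn un.
apply/eqP/eqP => [|->]; last by rewrite dstarE leqnn subnn.
by move=> d0; apply: ord_inj; move: d0; cycle_lia.
Qed.

Lemma dstar_add_sym u v : u != v -> dstar u v + dstar v u = n.
Proof. move/neq_ord; have := ltn_ord u; have := ltn_ord v; cycle_lia. Qed.

Lemma dstar_rinj u : injective (dstar u).
Proof.
move=> v w; have := ltn_ord u; have := ltn_ord v; have := ltn_ord w.
by move=> wn vn un d; apply: ord_inj; move: d; cycle_lia.
Qed.

Lemma dstar_linj x : injective (fun y => dstar y x).
Proof.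
move=> v w; have := ltn_ord x; have := ltn_ord v; have := ltn_ord w.
by move=> wn vn xn /= d; apply: ord_inj; move: d; cycle_lia.
Qed.

Lemma distC u v : dist u v = dist v u.
Proof. exact: minnC. Qed.

Lemma distxx u : dist u u = 0.
Proof. by rewrite /dist dstarE leqnn subnn. Qed.

Lemma ord_pred_neq u : 2 <= n -> ord_pred u != u.
Proof. by move=> n_ge2; apply/eqP => /(congr1 (@nat_of_ord n)); pred_cases u; lia. Qed.

Lemma dstar_pred_self u : 2 <= n -> dstar (ord_pred u) u = 1.
Proof. move=> n_ge2; pred_cases u; cycle_lia. Qed.

Lemma dstar_self_pred u : dstar u (ord_pred u) = n.-1.
Proof. pred_cases u; cycle_lia. Qed.

Lemma dstar_predl u w : w != ord_pred u -> dstar (ord_pred u) w = (dstar u w).+1.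
Proof. move/neq_ord; have := ltn_ord w; pred_cases u; cycle_lia. Qed.

Lemma dstar_predr y x : y != x -> dstar y (ord_pred x) = (dstar y x).-1.
Proof. move/neq_ord; have := ltn_ord y; pred_cases x; cycle_lia. Qed.

Lemma adj_ord_pred u : adj u (ord_pred u).
Proof.
rewrite /adj -[val u]/(nat_of_ord u) -[val (ord_pred u)]/(nat_of_ord (ord_pred u)).
apply/orP; right; apply/eqP; pred_cases u => -> un.
- by rewrite prednK ?modnn; lia.
- by rewrite prednK ?modn_small; lia.
Qed.

End CycleArithmetic.

Arguments dstar_rinj {n} u [x1 x2].
Arguments dstar_linj {n} x [x1 x2].

Lemma card_set_sum (T : finType) (S : {set T}) (P : pred T) :
  #|[set y in S | P y]| = \sum_(y in S) P y.
Proof.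
rewrite -sum1_card big_mkcond [RHS]big_mkcond /=.
by apply: eq_bigr => y _; rewrite inE; case: (y \in S); case: (P y).
Qed.

Lemma card_le_inj_bounded (T : finType) (X : {set T}) (f : T -> nat) d :
  injective f -> (forall y, y \in X -> 0 < f y <= d) -> #|X| <= d.
Proof.
move=> f_inj fX; rewrite cardE -(size_map f) -(size_iota 1 d).
apply: uniq_leq_size; first by rewrite map_inj_uniq ?enum_uniq.
by move=> j /mapP[y]; rewrite mem_enum => /fX fy ->; rewrite mem_iota; lia.
Qed.

Lemma sum_iota_trunc (F : nat -> nat) k s :
  k <= s -> (forall j, k < j -> F j = 0) ->
  \sum_(j <- iota 1 s) F j = \sum_(j <- iota 1 k) F j.
Proof.
move=> ks F0; rewrite -(subnKC ks) iotaD big_cat -[RHS]addn0; congr (_ + _).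
by apply: big1_seq => j; rewrite mem_iota => jk; apply: F0; lia.
Qed.

Lemma sum_iota_leq k s : k <= s -> \sum_(j <- iota 1 s) (j <= k) = k.
Proof.
move=> ks; rewrite (sum_iota_trunc ks) => [|j]; last by rewrite ltnNge => /negbTE->.
rewrite big_seq (eq_bigr (fun=> 1)) => [|j]; first by rewrite -big_seq sum1_size size_iota.
by rewrite mem_iota add1n ltnS => /andP[_ ->].
Qed.

Section Rank.
Variables (T : finType) (S : {set T}) (f : T -> nat).

Definition rank_by (w : T) := #|[set y in S | f y <= f w]|.

Lemma rank_by_le w z : w \in S -> z \in S -> (rank_by w <= rank_by z) = (f w <= f z).
Proof.
move=> wS zS; case: (leqP (f w) (f z)) => fwz.
- apply: subset_leq_card; apply/subsetP => y; rewrite !inE => /andP[-> fyw].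
  exact: leq_trans fyw fwz.
- apply/negbTE; rewrite -ltnNge; apply: proper_card; apply/properP; split.
  + apply/subsetP => y; rewrite !inE => /andP[-> fyz].
    exact: leq_trans fyz (ltnW fwz).
  + by exists w; rewrite !inE ?wS ?leqnn // -ltnNge.
Qed.

Lemma rank_by_lt w z : w \in S -> z \in S -> (rank_by w < rank_by z) = (f w < f z).
Proof. by move=> wS zS; rewrite !ltnNge rank_by_le. Qed.

Lemma rank_by_bound w : w \in S -> 0 < rank_by w <= #|S|.
Proof.
move=> wS; apply/andP; split; first by apply/card_gt0P; exists w; rewrite !inE wS leqnn.
by apply: subset_leq_card; apply/subsetP => y; rewrite inE => /andP[].
Qed.

Lemma rank_by_gt_card w a :
  w \in S -> (a <= f w) = (#|[set y in S | f y < a]| < rank_by w).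
Proof.
move=> wS; apply/esym; case: (leqP a (f w)) => afw.
- apply: proper_card; apply/properP; split.
  + by apply/subsetP => y; rewrite !inE => /andP[-> /ltnW/leq_trans->].
  + by exists w; rewrite !inE ?wS ?leqnn //= -leqNgt.
- apply/negbTE; rewrite -leqNgt; apply: subset_leq_card.
  by apply/subsetP => y; rewrite !inE => /andP[-> /leq_ltn_trans->].
Qed.

Hypothesis f_inj : injective f.

Lemma rank_by_inj w z : w \in S -> z \in S -> rank_by w = rank_by z -> w = z.
Proof.
move=> wS zS rwz; apply: f_inj; apply/eqP.
by rewrite eqn_leq -!rank_by_le // rwz leqnn.
Qed.

Lemma perm_rank_by_iota : perm_eq (map rank_by (enum S)) (iota 1 #|S|).
Proof.
have ranks_uniq : uniq (map rank_by (enum S)).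
  rewrite map_inj_in_uniq ?enum_uniq // => w z; rewrite !mem_enum.
  exact: rank_by_inj.
have ranks_sub : {subset map rank_by (enum S) <= iota 1 #|S|}.
  by move=> j /mapP[w]; rewrite mem_enum => /rank_by_bound rw ->; rewrite mem_iota; lia.
have sizes : size (iota 1 #|S|) <= size (map rank_by (enum S)).
  by rewrite size_iota size_map -cardE.
have [_ same] := uniq_min_size ranks_uniq ranks_sub sizes.
by apply: uniq_perm; rewrite ?iota_uniq.
Qed.

Lemma sum_rank_by (F : nat -> nat) :
  \sum_(w in S) F (rank_by w) = \sum_(j <- iota 1 #|S|) F j.
Proof. by rewrite -(perm_big _ perm_rank_by_iota) big_map big_enum. Qed.

Lemma card_rank_by (P : pred nat) :
  #|[set w in S | P (rank_by w)]| = \sum_(j <- iota 1 #|S|) P j.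
Proof. by rewrite card_set_sum (sum_rank_by (fun j => P j : nat)). Qed.

Lemma rank_by_onto j : 0 < j <= #|S| -> exists2 w, w \in S & rank_by w = j.
Proof.
move=> j_range; have : j \in map rank_by (enum S).
  by rewrite (perm_mem perm_rank_by_iota) mem_iota; lia.
by case/mapP => w; rewrite mem_enum => wS ->; exists w.
Qed.

End Rank.

Lemma sum_eq1 (T : finType) (A : {set T}) u : u \in A -> \sum_(y in A) (y == u) = 1.
Proof. by move=> uA; rewrite (bigD1 u) //= eqxx big1 // => y /andP[_ /negbTE->]. Qed.

Lemma card_setD1 (T : finType) (A : {set T}) x : x \in A -> #|A :\ x| = #|A|.-1.
Proof. by move=> xA; rewrite (cardsD1 x A) xA. Qed.

Lemma card_setD1_sum (T : finType) (A : {set T}) x (P : pred T) :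
  #|[set y in A :\ x | P y]| = \sum_(y in A) ((y != x) && P y).
Proof.
rewrite -card_set_sum; apply: eq_card => y; rewrite !inE.
by case: (y != x); case: (y \in A).
Qed.

Section Spans.
Variables (n : nat) (A : {set 'I_n}).
Implicit Types u v w x y z : 'I_n.

(* [span A u w] computed as the rank of [w] clockwise from [u] (see [span_dspan]). *)
Definition dspan u w := rank_by (A :\ u) (dstar u) w.

Lemma dspan_sum u w : dspan u w = \sum_(y in A) ((y != u) && (dstar u y <= dstar u w)).
Proof. exact: card_setD1_sum. Qed.

Lemma pos_sum x : pos A x = \sum_(y in A) (val y < val x).
Proof. exact: card_set_sum. Qed.

Lemma span_dspan u w : u \in A -> w \in A -> u != w -> span A u w = dspan u w.
Proof.
move=> uA wA uw; have wAu : w \in A :\ u by rewrite !inE eq_sym uw.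
have := rank_by_bound (dstar u) wAu; rewrite -/(dspan u w).
have cardA : #|A| = #|A :\ u|.+1 by rewrite (cardsD1 u A) uA.
have count : dspan u w + pos A u + \sum_(y in A) (y == u)
           = pos A w + \sum_(y in A) (y == w) + \sum_(y in A) (w < u).
  rewrite dspan_sum !pos_sum -!big_split /=; apply: eq_bigr => y _.
  have := ltn_ord y; have := ltn_ord u; have := ltn_ord w; move: uw; cycle_lia.
rewrite sum_eq1 // sum_eq1 // sum_nat_const in count.
rewrite /span; move: count cardA; set D := #|A :\ u|; case: ifPn => ?; lia.
Qed.

Lemma dspan_le_dstar u w : w != u -> dspan u w <= dstar u w.
Proof.
move=> wu; apply: (card_le_inj_bounded (dstar_rinj u)) => y.
by rewrite !inE => /andP[/andP[yu _] ->]; rewrite lt0n dstar_eq0 eq_sym yu.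
Qed.

Lemma dspan_bound u w : u \in A -> w \in A -> w != u -> 0 < dspan u w < #|A|.
Proof.
move=> uA wA wu; have wAu : w \in A :\ u by rewrite !inE wu.
have := rank_by_bound (dstar u) wAu; have := cardsD1 u A; rewrite uA add1n.
by rewrite -/(dspan u w); set m := #|A|; set D := #|A :\ u|; lia.
Qed.

Lemma dspan_le u w w' : w \in A -> w != u -> w' \in A -> w' != u ->
  (dspan u w <= dspan u w') = (dstar u w <= dstar u w').
Proof. by move=> *; apply: rank_by_le; rewrite !inE; apply/andP. Qed.

Lemma dspan_lt u w w' : w \in A -> w != u -> w' \in A -> w' != u ->
  (dspan u w < dspan u w') = (dstar u w < dstar u w').
Proof. by move=> *; apply: rank_by_lt; rewrite !inE; apply/andP. Qed.

Lemma dspan_onto u j : u \in A -> 0 < j < #|A| ->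
  exists w, [/\ w \in A, w != u & dspan u w = j].
Proof.
move=> uA j_range; have [|w] := @rank_by_onto _ (A :\ u) _ (dstar_rinj u) j.
  by rewrite card_setD1 //; lia.
by rewrite !inE => /andP[wu wA]; exists w.
Qed.

Lemma pos_lt u w : u \in A -> u < w -> pos A u < pos A w.
Proof.
move=> uA uw; apply: proper_card; apply/properP; split.
- by apply/subsetP => y; rewrite !inE => /andP[-> /ltn_trans->].
- by exists u; rewrite !inE ?uA ?ltnn.
Qed.

Lemma pos_le u : pos A u <= #|A|.
Proof. by apply: subset_leq_card; apply/subsetP => y; rewrite inE => /andP[]. Qed.

Lemma dspan_add_sym u w : u \in A -> w \in A -> u != w -> dspan u w + dspan w u = #|A|.
Proof.
move=> uA wA uw; rewrite -!span_dspan // 1?eq_sym //.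
have := pos_le u; have := pos_le w; rewrite /span.
case: (ltngtP u w) => [lt | lt | /ord_inj eq]; last by rewrite eq eqxx in uw.
- have := pos_lt uA lt; set m := #|A|; case: ifPn => ?; case: ifPn => ?; lia.
- have := pos_lt wA lt; set m := #|A|; case: ifPn => ?; case: ifPn => ?; lia.
Qed.

Lemma dspan_self_pred u : u \in A -> dspan u (ord_pred u) = #|A|.-1.
Proof.
move=> uA; rewrite (cardsD1 u A) uA /dspan /rank_by dstar_self_pred /=.
apply: eq_card => y; rewrite inE.
have -> : dstar u y <= n.-1 by have := dstar_lt u y; lia.
by rewrite andbT.
Qed.

Lemma dspan_pred_self u : 2 <= n -> u \in A -> dspan (ord_pred u) u = 1.
Proof.
move=> n_ge2 uA; have up : u != ord_pred u by rewrite eq_sym ord_pred_neq.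
have := dspan_le_dstar up; rewrite dstar_pred_self //.
have : 0 < dspan (ord_pred u) u.
  by apply/card_gt0P; exists u; rewrite !inE up uA leqnn.
lia.
Qed.

Lemma dspan_predl u w : 2 <= n -> u \in A -> w != u -> w != ord_pred u ->
  dspan (ord_pred u) w = (dspan u w).+1.
Proof.
move=> n_ge2 uA wu wp; rewrite !dspan_sum -add1n -(sum_eq1 uA) -big_split /=.
apply: eq_bigr => y _; rewrite (dstar_predl wp).
have := dstar_lt (ord_pred u) w; rewrite (dstar_predl wp).
case: (eqVneq y u) => [-> | yu].
- by rewrite eq_sym ord_pred_neq // dstar_pred_self //=; lia.
case: (eqVneq y (ord_pred u)) => [-> | yp] /=.
- by rewrite dstar_self_pred; lia.
- by rewrite dstar_predl //; lia.
Qed.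

End Spans.

Section SumOfDistances.
Variable n : nat.
Implicit Types (A C : {set 'I_n}) (u v w : 'I_n).

Lemma W_double A : (W A).*2 = \sum_(u in A) \sum_(w in A) dist u w.
Proof.
have W_mkcond B : W B = \sum_(u in B) \sum_(w in B) (if val u < val w then dist u w else 0).
  by apply: eq_bigr => u _; rewrite big_mkcondr.
rewrite -addnn {1}W_mkcond W_mkcond [X in X + _]exchange_big -big_split.
apply: eq_bigr => u _; rewrite -big_split; apply: eq_bigr => w _ /=.
case: (ltngtP (val u) (val w)) => [_ | _ | /val_inj->].
- by rewrite add0n.
- by rewrite addn0 distC.
- by rewrite distxx.
Qed.

Lemma W_setU1 C u : u \notin C -> W (u |: C) = W C + \sum_(w in C) dist u w.
Proof.
move=> uC; apply: double_inj; rewrite doubleD !W_double big_setU1 //= big_setU1 //=.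
rewrite distxx add0n (eq_bigr _ (fun w _ => big_setU1 _ uC)) big_split /=.
by rewrite (eq_bigr _ (fun w _ => distC w u)) -addnn addnA addnC.
Qed.

Lemma W_perturbation A u v : u \in A -> v \notin A ->
  W (perturbation A u v) + \sum_(w in A :\ u) dist u w
  = W A + \sum_(w in A :\ u) dist v w.
Proof.
move=> uA vA; have uAu : u \notin A :\ u by rewrite !inE eqxx.
have vAu : v \notin A :\ u by rewrite !inE (negbTE vA) andbF.
by rewrite /perturbation setUC W_setU1 // -[in W A](setD1K uA) W_setU1 // addnAC.
Qed.

End SumOfDistances.

(* Moving [u] one step back changes [dist u w] by [+1] if [w] lies in the clockwise
   half from [u], by [-1] if it lies in the other half, and by [0] at the antipode. *)
Lemma dist_ord_pred n (u w : 'I_n) : 2 <= n -> w != u -> w != ord_pred u ->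
  dist (ord_pred u) w + (n <= (dstar u w).*2) = dist u w + ((dstar u w).*2 + 2 <= n).
Proof.
move=> n_ge2 wu wp; rewrite /dist dstar_predl //.
have := dstar_add_sym wu; have := dstar_add_sym wp; rewrite dstar_predl //.
by have := dstar_lt (ord_pred u) w; rewrite dstar_predl //; lia.
Qed.

Lemma ord_pred_closed_full n (L : {set 'I_n}) x :
  x \in L -> (forall y, y \in L -> ord_pred y \in L) -> forall y, y \in L.
Proof.
move=> xL predL y; suff: forall d x, x \in L -> dstar y x = d -> y \in L.
  by move/(_ _ x xL erefl).
elim=> [|d IH] {xL}x xL dyx; first by move/eqP: dyx; rewrite dstar_eq0 => /eqP->.
have yx : y != x by rewrite -dstar_eq0 dyx.
by apply: (IH (ord_pred x) (predL x xL)); rewrite dstar_predr // dyx.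
Qed.

Section ShortChord.
Variables (n : nat) (A : {set 'I_n}).
Hypotheses (n_ge2 : 2 <= n) (A_ge2 : 2 <= #|A|).
Implicit Types u v w z : 'I_n.

(* [z] has span [uphalf #|A|] from [u], but the clockwise arc from [u] to [z] is
   too short for condition (3). *)
Definition short_chord u z :=
  [&& z \in A, z != u, dspan A u z == uphalf #|A| & (dstar u z).*2 + (2 - odd #|A|) <= n].

Lemma short_chord_near u z : u \in A -> short_chord u z ->
  #|A|./2 <= \sum_(w in A :\ u) ((dstar u w).*2 + 2 <= n).
Proof.
move=> uA /and4P[zA zu /eqP spanz dz]; have zAu : z \in A :\ u by rewrite !inE zu zA.
have -> : #|A|./2 = \sum_(w in A :\ u) (dspan A u w <= #|A|./2).
  rewrite -card_set_sum /dspan (card_rank_by (A :\ u) (dstar_rinj u) (fun j => j <= _)).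
  by rewrite sum_iota_leq // card_setD1 //; lia.
apply: leq_sum => w wAu; case: (leqP (dspan A u w)) => //= span_w; rewrite lt0b.
have span_le : dspan A u w + odd #|A| <= dspan A u z.
  by rewrite spanz; set m := #|A| in span_w *; lia.
have dstar_le : dstar u w + odd #|A| <= dstar u z.
  by move: span_le; rewrite /dspan; case: (odd _); rewrite ?addn1 ?addn0 ?rank_by_lt ?rank_by_le.
by move: dz dstar_le; set m := #|A|; case: (odd m) => /=; lia.
Qed.

Lemma short_chord_far u z : u \in A -> short_chord u z ->
  \sum_(w in A :\ u) (n <= (dstar u w).*2) <= #|A|.-1 - uphalf #|A|.
Proof.
move=> uA /and4P[zA zu /eqP spanz dz]; have zAu : z \in A :\ u by rewrite !inE zu zA.
have near_count : \sum_(w in A :\ u) (dspan A u w <= uphalf #|A|) = uphalf #|A|.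
  rewrite -card_set_sum /dspan (card_rank_by (A :\ u) (dstar_rinj u) (fun j => j <= _)).
  by rewrite sum_iota_leq // card_setD1 //; lia.
have : \sum_(w in A :\ u) ((n <= (dstar u w).*2) + (dspan A u w <= uphalf #|A|))
       <= \sum_(w in A :\ u) 1.
  apply: leq_sum => w wAu; case: (leqP (dspan A u w)) => span_w; last by rewrite addn0 leq_b1.
  have : dstar u w <= dstar u z.
    by rewrite -(rank_by_le (dstar u) wAu zAu) -/(dspan A u w) -/(dspan A u z) spanz.
  by move: dz; case: (odd _) => /=; lia.
rewrite big_split /= sum1_card near_count card_setD1 //.
by set s := \sum_(w in A :\ u) _; set m := #|A|; lia.
Qed.

Lemma short_chord_pred_gain u z : u \in A -> ord_pred u \notin A -> short_chord u z ->
  \sum_(w in A :\ u) dist u w < \sum_(w in A :\ u) dist (ord_pred u) w.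
Proof.
move=> uA pA chord; have near := short_chord_near uA chord.
have far := short_chord_far uA chord.
have shift : \sum_(w in A :\ u) dist (ord_pred u) w + \sum_(w in A :\ u) (n <= (dstar u w).*2)
           = \sum_(w in A :\ u) dist u w + \sum_(w in A :\ u) ((dstar u w).*2 + 2 <= n).
  rewrite -!big_split; apply: eq_bigr => w; rewrite !inE => /andP[wu wA].
  by apply: dist_ord_pred => //; apply: contraNneq pA => <-.
move: near far shift; set m := #|A|; lia.
Qed.

Lemma short_chord_pred u z : u \in A -> ord_pred u \in A -> short_chord u z ->
  exists z', short_chord (ord_pred u) z'.
Proof.
move=> uA pA /and4P[zA zu /eqP spanz dz].
have up : u != ord_pred u by rewrite eq_sym ord_pred_neq.
have dz_pos : 0 < dstar u z by rewrite lt0n dstar_eq0 eq_sym.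
case: (leqP (uphalf #|A|) 1) => [small | large].
  exists u; apply/and4P; split => //.
  - by rewrite dspan_pred_self //; apply/eqP; set m := #|A| in small *; lia.
  - by rewrite dstar_pred_self //; move: dz; set m := #|A| in small *; lia.
have [|z' [z'A z'u spanz']] := @dspan_onto _ A u (uphalf #|A|).-1 uA.
  by set m := #|A| in large *; lia.
have z'p : z' != ord_pred u.
  apply/eqP => z'_pred; move: spanz'; rewrite z'_pred dspan_self_pred //.
  by set m := #|A| in large *; lia.
exists z'; apply/and4P; split => //.
- by rewrite dspan_predl // spanz'; apply/eqP; lia.
- have : dstar u z' < dstar u z by rewrite -(dspan_lt z'A) // spanz' spanz; lia.
  by rewrite dstar_predl //; move: dz; set m := #|A|; lia.
Qed.

Lemma local_maximizer_no_short_chord u z :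
  local_maximizer A -> u \in A -> short_chord u z -> False.
Proof.
move=> locmax uA chord.
pose L := [set x in A | [exists z, short_chord x z]].
have predL x : x \in L -> ord_pred x \in L.
  rewrite !inE => /andP[xA /existsP[zx chord_x]].
  case: (boolP (ord_pred x \in A)) => pA /=.
    have [z' chord'] := short_chord_pred xA pA chord_x.
    by apply/existsP; exists z'.
  have := short_chord_pred_gain xA pA chord_x.
  have := locmax x (ord_pred x) xA pA (adj_ord_pred x); have := W_perturbation xA pA.
  lia.
have uL : u \in L by rewrite inE uA; apply/existsP; exists z.
have A_full : A = setT.
  by apply/setP => y; have := ord_pred_closed_full uL predL y; rewrite !inE => /andP[].
move: chord => /and4P[zA zu /eqP spanz dz]; have := dspan_le_dstar A zu.
by rewrite spanz; move: dz; rewrite A_full cardsT card_ord; lia.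
Qed.

End ShortChord.

Section Conditions.
Variables (n : nat) (A : {set 'I_n}).
Implicit Types u w : 'I_n.

Definition half_spans_balanced : Prop :=
  (odd #|A| -> forall x, x \in sigmastar A (#|A| ./2) -> 1 <= x <= n./2) /\
  (~~ odd #|A| -> forall x, x \in sigmastar A (#|A| ./2) -> (x == n./2) || (x == uphalf n)).

Definition spans_geodesic : Prop :=
  (forall k, 1 <= k -> k.*2 < #|A| -> perm_eq (sigma A k) (sigmastar A k)) /\
  (~~ odd #|A| -> forall x, (x \in sigma A (#|A| ./2)) = (x == n./2)).

Lemma mem_sigmastar k x : x \in sigmastar A k ->
  exists u w, [/\ u \in A, w \in A, u != w, span A u w = k & x = dstar u w].
Proof. by case/mapP => -[u w]; rewrite mem_enum => /and4P[? ? ? /eqP] /= ? ->; exists u, w. Qed.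

Lemma mem_sigma k x : x \in sigma A k ->
  exists u w, [/\ u \in A, w \in A, u != w, span A u w = k & x = dist u w].
Proof. by case/mapP => -[u w]; rewrite mem_enum => /and4P[? ? ? /eqP] /= ? ->; exists u, w. Qed.

Lemma dstar_in_sigmastar u w :
  u \in A -> w \in A -> u != w -> dstar u w \in sigmastar A (span A u w).
Proof. by move=> uA wA uw; apply/mapP; exists (u, w); rewrite // mem_enum !inE uA wA uw /=. Qed.

Lemma dist_in_sigma u w :
  u \in A -> w \in A -> u != w -> dist u w \in sigma A (span A u w).
Proof. by move=> uA wA uw; apply/mapP; exists (u, w); rewrite // mem_enum !inE uA wA uw /=. Qed.

Lemma maximizer_local : maximizer A -> local_maximizer A.
Proof.
move=> maxA u v uA vA _; apply: maxA.
by rewrite /perturbation setUC cardsU1 !inE (negbTE vA) andbF (cardsD1 u A) uA.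
Qed.

Lemma local_maximizer_balanced :
  2 <= n -> 2 <= #|A| -> local_maximizer A -> half_spans_balanced.
Proof.
move=> n_ge2 A_ge2 locmax; have no_chord := local_maximizer_no_short_chord n_ge2 A_ge2 locmax.
split=> [m_odd | m_even] x /mem_sigmastar[u [w [uA wA uw span_uw ->]]].
all: have wu : w != u by rewrite eq_sym.
all: have := span_dspan uA wA uw; rewrite span_uw => span_half.
all: have := dspan_add_sym uA wA uw; have := dstar_add_sym uw => sym_d sym_s.
- rewrite lt0n dstar_eq0 uw /= leqNgt; apply/negP => far.
  apply: (no_chord w u) => //; apply/and4P; split => //; try apply/eqnP;
    by rewrite ?m_odd /=; move: span_half sym_s; set m := #|A|; lia.
- apply/negPn/negP; rewrite negb_or => /andP[/eqP off_lo /eqP off_hi].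
  case: (leqP ((dstar u w).*2 + 2) n) => d_uw.
  + apply: (no_chord u w) => //; apply/and4P; split => //; try apply/eqnP;
      by rewrite ?(negbTE m_even) /=; move: span_half sym_s; set m := #|A|; lia.
  + apply: (no_chord w u) => //; apply/and4P; split => //; try apply/eqnP;
      by rewrite ?(negbTE m_even) /=; move: span_half sym_s; set m := #|A|; lia.
Qed.

Lemma balanced_short_span u w : 2 <= #|A| -> half_spans_balanced ->
  u \in A -> w \in A -> w != u -> (dspan A u w).*2 < #|A| -> (dstar u w).*2 <= n.
Proof.
move=> A_ge2 [bal_odd bal_even] uA wA wu short.
have [|w' [w'A w'u span_w']] := @dspan_onto _ A u #|A|./2 uA; first by set m := #|A|; lia.
have uw' : u != w' by rewrite eq_sym.
have := dstar_in_sigmastar uA w'A uw'; rewrite span_dspan // span_w' => half.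
case: (boolP (odd #|A|)) => [m_odd | m_even].
- have := bal_odd m_odd _ half.
  have : dspan A u w <= dspan A u w' by rewrite span_w'; move: short; set m := #|A|; lia.
  by rewrite dspan_le //; lia.
- have := bal_even m_even _ half.
  have : dspan A u w < dspan A u w' by rewrite span_w'; move: short m_even; set m := #|A|; lia.
  by rewrite dspan_lt // => lt /orP[] /eqP; lia.
Qed.

Lemma balanced_geodesic : 2 <= #|A| -> half_spans_balanced -> spans_geodesic.
Proof.
move=> A_ge2 bal; split=> [k k_pos k_short | m_even x].
  rewrite (_ : sigma A k = sigmastar A k) //; apply/eq_in_map => -[u w].
  rewrite mem_enum => /and4P[/= uA wA uw /eqP span_k]; have wu : w != u by rewrite eq_sym.
  have := balanced_short_span A_ge2 bal uA wA wu; rewrite -span_dspan // span_k.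
  by move=> /(_ k_short); have := dstar_add_sym uw; rewrite /dist; lia.
have half_dist u w : u \in A -> w \in A -> u != w -> span A u w = #|A|./2 -> dist u w = n./2.
  move=> uA wA uw span_half; have := bal.2 m_even (dstar u w).
  rewrite -span_half => /(_ (dstar_in_sigmastar uA wA uw)).
  by have := dstar_add_sym uw; rewrite /dist => sym /orP[] /eqP; lia.
apply/idP/eqP => [/mem_sigma[u [w [uA wA uw span_half ->]]] | ->]; first exact: half_dist.
have [u uA] : exists u, u \in A by apply/set0Pn; rewrite -card_gt0 ltnW.
have [|w [wA wu span_half]] := @dspan_onto _ A u #|A|./2 uA; first by set m := #|A|; lia.
have uw : u != w by rewrite eq_sym.
have span_uw : span A u w = #|A|./2 by rewrite span_dspan.
by rewrite -(half_dist u w) // -span_uw; apply: dist_in_sigma.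
Qed.
End Conditions.

Section GeodesicSpans.
Variables (n : nat) (A : {set 'I_n}).
Implicit Types u w x : 'I_n.

(* Since [dist <= dstar] pointwise, equal multisets force equality pairwise. *)
Lemma perm_sigma_dist k : perm_eq (sigma A k) (sigmastar A k) ->
  forall u w, u \in A -> w \in A -> u != w -> span A u w = k -> dist u w = dstar u w.
Proof.
move=> /perm_sumn; rewrite /sigma /sigmastar !sumnE !big_map !big_enum /=.
move=> sums u w uA wA uw span_k.
have /leqif_sum le_sums : forall p, p \in span_pairs A k ->
    dist p.1 p.2 <= dstar p.1 p.2 ?= iff (dist p.1 p.2 == dstar p.1 p.2).
  by move=> p _; apply/leqif_eq/geq_minl.
move: le_sums => [_]; rewrite sums eqxx => /esym/forallP/(_ (u, w))/implyP/(_ _)/eqP.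
by apply; rewrite !inE uA wA uw span_k /=.
Qed.

Lemma geodesic_short_span u w : spans_geodesic A -> u \in A -> w \in A -> u != w ->
  (dspan A u w).*2 < #|A| -> dist u w = dstar u w.
Proof.
move=> [geo _] uA wA uw short; have wu : w != u by rewrite eq_sym.
have /andP[span_pos _] := dspan_bound uA wA wu.
by apply: (perm_sigma_dist (geo _ span_pos short)); rewrite ?span_dspan.
Qed.

Lemma geodesic_half_span u w : spans_geodesic A -> ~~ odd #|A| -> u \in A -> w \in A ->
  u != w -> (dspan A u w).*2 = #|A| -> dist u w = n./2.
Proof.
move=> [_ geo] m_even uA wA uw half; apply/eqP; rewrite -geo //.
have -> : #|A|./2 = span A u w by rewrite span_dspan // -half doubleK.
exact: dist_in_sigma.
Qed.

End GeodesicSpans.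

Lemma sum_ord_range n d : d < n -> \sum_(i < n) ((0 < i) && (i <= d)) = d.
Proof.
move=> dn; rewrite -(big_mkord xpredT (fun i => ((0 < i) && (i <= d) : nat))) /index_iota subn0.
case: n dn => // n dn; rewrite -add1n iotaD big_cat big_seq1 /= add0n.
transitivity (\sum_(j <- iota 1 n) (j <= d)); last exact: sum_iota_leq.
apply: eq_big_seq => j.
by rewrite mem_iota add0n => /andP[j_pos _]; rewrite j_pos.
Qed.

Lemma dstar_count n (u w : 'I_n) :
  dstar u w = \sum_x ((0 < dstar u x) && (dstar u x <= dstar u w)).
Proof.
pose dord x := Ordinal (dstar_lt u x).
have dord_inj : injective dord by move=> x y /(congr1 val) /dstar_rinj.
by rewrite -[LHS](sum_ord_range (dstar_lt u w)) (reindex_inj dord_inj).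
Qed.

Definition spans_above (m c : nat) := \sum_(j <- iota 1 m.-1) ((j.*2 < m) && (c < j)).

Definition spans_above_total (m : nat) := \sum_(j <- iota 1 (m.-1)./2) spans_above m j.-1.

Lemma spans_above_eq0 m c : (m.-1)./2 <= c -> spans_above m c = 0.
Proof. by move=> cm; apply: big1_seq => j _; apply/eqP; rewrite eqb0 negb_and -!leqNgt; lia. Qed.

Lemma sum_setD1_eq0 (T : finType) (A : {set T}) x (F : T -> nat) :
  F x = 0 -> \sum_(u in A) F u = \sum_(u in A :\ x) F u.
Proof.
move=> Fx0; case: (boolP (x \in A)) => xA; first by rewrite (big_setD1 x xA) Fx0.
by apply: eq_bigl => u; rewrite !inE; case: eqP => // ->; rewrite (negbTE xA).
Qed.

Section ShortArcs.
Variables (n : nat) (A : {set 'I_n}).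
Implicit Types u w x : 'I_n.

Definition points_before u x := #|[set y in A :\ u | dstar u y < dstar u x]|.

Lemma short_arcs_through u x : u \in A ->
  \sum_(w in A) ((u != w) && ((dspan A u w).*2 < #|A|))
                 * ((0 < dstar u x) && (dstar u x <= dstar u w))
  = if u == x then 0 else spans_above #|A| (points_before u x).
Proof.
move=> uA; case: eqP => [<- | /eqP ux].
  by rewrite big1 // => w _; rewrite dstarE leqnn subnn muln0.
rewrite (sum_setD1_eq0 _ (x := u)) ?eqxx //.
have x_pos : 0 < dstar u x by rewrite lt0n dstar_eq0.
transitivity (\sum_(w in A :\ u) ((rank_by (A :\ u) (dstar u) w).*2 < #|A|)
                                && (points_before u x < rank_by (A :\ u) (dstar u) w)).
  apply: eq_bigr => w wAu; have uw : u != w by move: wAu; rewrite !inE eq_sym => /andP[].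
  rewrite uw x_pos (rank_by_gt_card _ _ wAu) -/(points_before u x) /dspan.
  by case: (_ < _); case: (_ < _).
rewrite -card_set_sum (card_rank_by _ (dstar_rinj u) (fun j => (j.*2 < _) && (_ < j))).
by rewrite /spans_above card_setD1.
Qed.

Lemma points_before_rank u x : u \in A -> u != x ->
  (points_before u x).+1 = rank_by (A :\ x) (fun y => dstar y x) u.
Proof.
move=> uA ux; rewrite /points_before /rank_by !card_setD1_sum -add1n -(sum_eq1 uA).
rewrite -big_split; apply: eq_bigr => y _ /=.
by have := ltn_ord y; have := ltn_ord u; have := ltn_ord x; move: ux; cycle_lia.
Qed.

(* Every [x] lies on the same number of short arcs [(u, w]], whatever [A] is. *)
Lemma short_arcs_through_total x : 2 <= #|A| ->
  \sum_(u in A) (if u == x then 0 else spans_above #|A| (points_before u x))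
  = spans_above_total #|A|.
Proof.
move=> A_ge2; rewrite (sum_setD1_eq0 _ (x := x)) ?eqxx //.
have large : (#|A|.-1)./2 <= #|A :\ x|.
  by have := cardsD1 x A; case: (x \in A) => /=; set m := #|A|; set D := #|A :\ x|; lia.
transitivity (\sum_(u in A :\ x) spans_above #|A| (rank_by (A :\ x) (fun y => dstar y x) u).-1).
  apply: eq_bigr => u; rewrite !inE => /andP[ux uA].
  by rewrite (negbTE ux) -points_before_rank // eq_sym.
rewrite (sum_rank_by _ (dstar_linj x) (fun r => spans_above #|A| r.-1)).
by rewrite (sum_iota_trunc large) // => j j_large; apply: spans_above_eq0; lia.
Qed.

Lemma sum_short_dstar : 2 <= #|A| ->
  \sum_(u in A) \sum_(w in A) ((u != w) && ((dspan A u w).*2 < #|A|)) * dstar u w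
  = n * spans_above_total #|A|.
Proof.
move=> A_ge2; pose short u w : nat := (u != w) && ((dspan A u w).*2 < #|A|).
pose on_arc u w x : nat := (0 < dstar u x) && (dstar u x <= dstar u w).
transitivity (\sum_(u in A) \sum_(w in A) \sum_x short u w * on_arc u w x).
  apply: eq_bigr => u _; apply: eq_bigr => w _.
  by rewrite [dstar u w]dstar_count big_distrr.
rewrite (eq_bigr _ (fun u _ => exchange_big _ _ _ _ _ _)) exchange_big /=.
rewrite (eq_bigr (fun=> spans_above_total #|A|)) ?sum_nat_const ?card_ord // => x _.
rewrite -(short_arcs_through_total x A_ge2); apply: eq_bigr => u uA.
exact: short_arcs_through.
Qed.

End ShortArcs.

Lemma count_half_spans m : 0 < m -> \sum_(j <- iota 1 m.-1) (j.*2 == m) = ~~ odd m.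
Proof.
move=> m_pos; have split_half : \sum_(j <- iota 1 m.-1) (j <= m./2)
    = \sum_(j <- iota 1 m.-1) (j <= m.-1./2) + \sum_(j <- iota 1 m.-1) (j.*2 == m).
  by rewrite -big_split; apply: eq_bigr => j _ /=; case: eqP; case: leqP; case: leqP; lia.
by move: split_half; rewrite !sum_iota_leq; lia.
Qed.

Lemma sum_half_span n (A : {set 'I_n}) :
  \sum_(u in A) \sum_(w in A) ((u != w) && ((dspan A u w).*2 == #|A|)) * n./2
  = #|A| * (~~ odd #|A| * n./2).
Proof.
rewrite -sum_nat_const; apply: eq_bigr => u uA; rewrite -big_distrl /=; congr (_ * _).
rewrite (sum_setD1_eq0 _ (x := u)) ?eqxx //.
rewrite (eq_bigr (fun w => ((rank_by (A :\ u) (dstar u) w).*2 == #|A| : nat))); last first.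
  by move=> w; rewrite !inE eq_sym => /andP[-> _].
rewrite -card_set_sum (card_rank_by _ (dstar_rinj u) (fun j => j.*2 == #|A|)) card_setD1 //.
by rewrite count_half_spans //; apply/card_gt0P; exists u.
Qed.

Section SumFormula.
Variables (n : nat) (A : {set 'I_n}).
Hypothesis geoA : spans_geodesic A.
Implicit Types u w : 'I_n.

Let short u w : nat := (u != w) && ((dspan A u w).*2 < #|A|).
Let half u w : nat := (u != w) && ((dspan A u w).*2 == #|A|).

(* A pair is counted through its orientation of smaller span, in which [dist] is
   [dstar]; pairs of half span are at distance [n./2]. *)
Lemma dist_geodesic_split u w : u \in A -> w \in A ->
  dist u w = short u w * dstar u w + short w u * dstar w u + half u w * n./2.
Proof.
move=> uA wA; rewrite /short /half; case: (eqVneq u w) => [-> | uw].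
  by rewrite distxx.
have wu : w != u by rewrite eq_sym.
have := dspan_add_sym uA wA uw; rewrite /=; set m := #|A| => sym.
case: (ltngtP (dspan A u w).*2 m) => span_uw.
- rewrite (geodesic_short_span geoA) //.
  by rewrite (_ : (dspan A w u).*2 < m = false) //=; [lia | apply/negbTE; lia].
- rewrite distC (geodesic_short_span geoA) //; last by lia.
  by rewrite (_ : (dspan A w u).*2 < m = true) //=; [lia | apply/idP; lia].
- have m_even : ~~ odd m by rewrite -span_uw odd_double.
  rewrite (geodesic_half_span geoA) // (_ : (dspan A w u).*2 < m = false) /=; first lia.
  by apply/negbTE; lia.
Qed.

Lemma W_geodesic : 2 <= #|A| ->
  (W A).*2 = (n * spans_above_total #|A|).*2 + #|A| * (~~ odd #|A| * n./2).
Proof.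
move=> A_ge2; rewrite W_double.
rewrite (eq_bigr _ (fun u uA => eq_bigr _ (fun w wA => dist_geodesic_split uA wA))).
rewrite (eq_bigr _ (fun u _ => big_split _ _ _ _ _)) big_split /=.
rewrite (eq_bigr _ (fun u _ => big_split _ _ _ _ _)) big_split /=.
rewrite [X in _ + X + _]exchange_big /= sum_short_dstar // sum_half_span.
by rewrite -addnn.
Qed.

End SumFormula.

Lemma geodesic_maximizer n (A : {set 'I_n}) :
  2 <= n -> 2 <= #|A| -> spans_geodesic A -> maximizer A.
Proof.
move=> n_ge2 A_ge2 geoA.
have [M /eqP cardM maxM] :=
  @arg_maxnP _ A (fun B : {set 'I_n} => #|B| == #|A|) (@W n) (eqxx _).
have M_ge2 : 2 <= #|M| by rewrite cardM.
have M_max : maximizer M by move=> B cardB; apply: maxM; rewrite cardB cardM.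
have balM := local_maximizer_balanced n_ge2 M_ge2 (maximizer_local M_max).
have geoM := balanced_geodesic M_ge2 balM.
have WM_WA : W M = W A by apply: double_inj; rewrite !W_geodesic // cardM.
by move=> B cardB; rewrite -WM_WA; apply: maxM; rewrite cardB.
Qed.

Theorem mainTheorem13 (n : nat) (A : {set 'I_n}) :
  3 <= n -> 2 <= #|A| -> #|A| <= n ->
  [<-> maximizer A;
       local_maximizer A;
       (odd #|A| -> forall x, x \in sigmastar A (#|A| ./2) -> 1 <= x <= n./2) /\
       (~~ odd #|A| -> forall x, x \in sigmastar A (#|A| ./2) ->
                        (x == n./2) || (x == uphalf n));
       (forall k, 1 <= k -> k.*2 < #|A| -> perm_eq (sigma A k) (sigmastar A k)) /\
       (~~ odd #|A| -> forall x, (x \in sigma A (#|A| ./2)) = (x == n./2))].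
Proof.
move=> n_ge3 A_ge2 _; have n_ge2 : 2 <= n by exact: ltnW.
tfae.
- exact: maximizer_local.
- exact: local_maximizer_balanced.
- exact: balanced_geodesic.
- exact: geodesic_maximizer.
Qed.
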